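(* Let $r\ge 2$ be an integer and let $H$ be a graph that admits a proper $r$-colouring whose colour classes have sizes $\ell_1\ge \ell_2\ge\dots\ge \ell_r>0$. Let $x\in\left(0,\frac{1}{|V(H)|}\right)$, let $n$ be a positive integer, and set $\delta:=(r-2+x\ell_r)\frac{n}{r-1}$. Then every $n$-vertex graph $G$ with at least $(r-2+x|V(H)|)\frac{n}{r-1}$ vertices of degree at least $\delta$ has fractional hom$_H$-cover number at least $xn$.
   Context: Let $G^H$ denote the set of all graph homomorphisms $h:H\to G$, i.e. maps $h:V(H)\to V(G)$ such that $uv\in E(H)$ implies $h(u)h(v)\in E(G)$. A fractional hom$_H$-cover of $G$ is a function $c:V(G)\to[0,1]$ such that for every homomorphism $h\in G^H$, $\sum_{v\in V(G)} c(v)\,|h^{-1}(v)|\ge 1$; its size is $\sum_{v\in V(G)}c(v)$. The fractional hom$_H$-cover number of $G$ is the minimum size of a fractional hom$_H$-cover of $G$. *)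

From HB Require Import structures.
From mathcomp Require Import all_boot all_order all_algebra.
Set Implicit Arguments. Unset Strict Implicit. Unset Printing Implicit Defensive.
Import Order.TTheory GRing.Theory Num.Theory.
Local Open Scope ring_scope.

(* A (finite, undirected) graph is given by a vertex finType V and an
   adjacency relation e : rel V; simple graphs have e symmetric and irreflexive. *)

Definition is_hom (VH VG : finType) (eH : rel VH) (eG : rel VG) (h : VH -> VG) : Prop :=
  forall u v : VH, eH u v -> eG (h u) (h v).

Definition deg (VG : finType) (eG : rel VG) (v : VG) : nat := #|[set w | eG v w]|.

Definition proper_colouring (VH : finType) (eH : rel VH) (r : nat) (col : VH -> 'I_r) : Prop :=
  forall u v : VH, eH u v -> col u != col v.

Definition frac_hom_cover (R : realFieldType) (VH VG : finType) (eH : rel VH) (eG : rel VG)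
    (c : VG -> R) : Prop :=
  (forall v, 0 <= c v <= 1) /\
  forall h : VH -> VG, is_hom eH eG h ->
    1 <= \sum_(v : VG) c v * (#|[set u | h u == v]|)%:R.

Definition cover_size (R : realFieldType) (VG : finType) (c : VG -> R) : R :=
  \sum_(v : VG) c v.

From HB Require Import structures.
From mathcomp Require Import all_boot all_order all_algebra.
From mathcomp Require Import ring lra.
Set Implicit Arguments.
Unset Strict Implicit.
Unset Printing Implicit Defensive.
Import Order.TTheory GRing.Theory Num.Theory.
Local Open Scope ring_scope.

(* Let D be the set of vertices of degree at least delta and i0 a colour class
   of H of size l_r.  Greedily choose a clique q_1, ..., q_(r-1) in D, each q_j
   of least weight among the common neighbours in D of q_1, ..., q_(j-1); the
   degree condition keeps these common neighbourhoods large, and this bounds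
   the weight of D from below in terms of the weights of the q_j.  For a common
   neighbour w of the whole clique, sending class i0 to w and the other r-1
   classes onto the clique, in each of its r-1 cyclic rotations, gives
   homomorphisms H -> G whose cover constraints, summed, bound c(w) from below.
   Adding up both bounds gives total weight at least x n. *)

Lemma card_setI_ge (T : finType) (A B : {set T}) : (#|A| <= #|A :&: B| + #|~: B|)%N.
Proof.
by rewrite -(cardsID B A) leq_add2l subset_leq_card // setDE subsetIr.
Qed.

Section CommonNeighbourhood.
Variables (R : realFieldType) (V : finType) (e : rel V).

Definition common_nbhd (A : {set V}) (Q : seq V) : {set V} :=
  [set v in A | all (e^~ v) Q].

Lemma common_nbhd_cons A q Q :
  common_nbhd A (q :: Q) = common_nbhd A Q :&: [set w | e q w].
Proof.
by apply/setP => v; rewrite !inE /= -andbA [all _ _ && _]andbC.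
Qed.

Lemma card_common_nbhd_ge (A B : {set V}) (Q : seq V) (d : R) :
  all (mem B) Q -> {in B, forall q, #|V|%:R - (deg e q)%:R <= d} ->
  #|A|%:R - (size Q)%:R * d <= #|common_nbhd A Q|%:R.
Proof.
move=> + degB; elim: Q => [_|q Q IH /= /andP[qB QB]].
  rewrite mul0r subr0 ler_nat subset_leq_card //.
  by apply/subsetP => v vA; rewrite inE vA.
have := card_setI_ge (common_nbhd A Q) [set w | e q w].
rewrite -common_nbhd_cons -(ler_nat R) natrD => lb.
have := IH QB; have := degB q qB; rewrite /deg.
rewrite -(cardsC [set w | e q w]) natrD addrC addKr -addn1 natrD mulrDl mul1r.
lra.
Qed.

End CommonNeighbourhood.

Lemma sum_mul_card_fibre (R : realFieldType) (VH VG : finType) (c : VG -> R)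
    (h : VH -> VG) :
  \sum_(v : VG) c v * #|[set u | h u == v]|%:R = \sum_(u : VH) c (h u).
Proof.
rewrite (partition_big h xpredT) //=; apply: eq_bigr => v _.
rewrite cardsE -sum1_card natr_sum mulr_sumr.
by apply: eq_big => [u|u /eqP ->]; rewrite ?mulr1.
Qed.

Section CliqueRotation.
Variables (R : realFieldType) (VH VG : finType) (eH : rel VH) (eG : rel VG) (s : nat).
Hypothesis eG_sym : symmetric eG.
Variables (col : VH -> 'I_s.+2) (i0 : 'I_s.+2) (q : 'I_s.+1 -> VG) (w : VG).
Hypothesis col_proper : proper_colouring eH col.
Hypothesis q_clique : forall a b, a != b -> eG (q a) (q b).
Hypothesis w_adj : forall a, eG (q a) w.

Definition rotation_hom (t : 'I_s.+1) (u : VH) : VG :=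
  if unlift i0 (col u) is Some p then q (p + t) else w.

Lemma rotation_hom_is_hom t : is_hom eH eG (rotation_hom t).
Proof.
move=> u v /col_proper; rewrite /rotation_hom.
case: unliftP => [p ->|->]; case: unliftP => [p' ->|->] //.
- by rewrite (inj_eq lift_inj) => pp'; apply/q_clique; rewrite (inj_eq (addIr t)).
- by rewrite eG_sym.
- by rewrite eqxx.
Qed.

(* Over the [s.+1] rotations every vertex of the clique receives each of the
   other colour classes exactly once. *)
Lemma cover_clique_apex_ge (c : VG -> R) : frac_hom_cover eH eG c ->
  (s.+1)%:R <= (#|VH| - #|[set u | col u == i0]|)%:R * \sum_a c (q a)
               + (s.+1)%:R * #|[set u | col u == i0]|%:R * c w.
Proof.
case=> _ cover.
have : (s.+1)%:R <= \sum_(t : 'I_s.+1) \sum_(u : VH) c (rotation_hom t u).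
  rewrite -{1}(card_ord s.+1) -sumr_const; apply: ler_sum => t _.
  by rewrite -sum_mul_card_fibre; apply/cover/rotation_hom_is_hom.
rewrite exchange_big (bigID (fun u => col u == i0)) /= addrC.
congr (_ <= _ + _).
- transitivity (\sum_(u | col u != i0) \sum_a c (q a)).
    apply: eq_bigr => u; rewrite /rotation_hom.
    case: unliftP => [p -> _|->]; last by rewrite eqxx.
    by rewrite [RHS](reindex_inj (addrI p)).
  rewrite sumr_const mulr_natl -(cardsC [set u | col u == i0]) addKn.
  by congr (_ *+ _); apply: eq_card => u; rewrite !inE.
- transitivity (\sum_(u | col u == i0) (s.+1)%:R * c w).
    apply: eq_bigr => u /eqP cu.
    by rewrite /rotation_hom cu unlift_none sumr_const card_ord mulr_natl.
  by rewrite sumr_const cardsE -mulr_natr; ring.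
Qed.

End CliqueRotation.

Section GreedyClique.
Variables (R : realFieldType) (V : finType) (e : rel V).
Hypotheses (e_sym : symmetric e) (e_irr : irreflexive e).
Variables (c : V -> R) (D : {set V}).
Hypothesis c_ge0 : forall v, 0 <= c v.

Definition clipped_weight (Q : seq V) (m : R) : R :=
  \sum_(v in D) (if v \in common_nbhd e D Q then m else c v).

Definition is_clique (Q : seq V) : Prop := {in Q &, forall a b, a != b -> e a b}.

Lemma clipped_weight_raise Q Q' m m' :
  common_nbhd e D Q' \subset common_nbhd e D Q ->
  {in common_nbhd e D Q, forall v, m' <= c v} ->
  clipped_weight Q m + (m' - m) * #|common_nbhd e D Q|%:R <= clipped_weight Q' m'.
Proof.
move=> /subsetP QQ' m'_le.
have -> : (m' - m) * #|common_nbhd e D Q|%:R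
          = \sum_(v in D) (if v \in common_nbhd e D Q then m' - m else 0).
  rewrite -big_mkcondr /= sumr_const mulr_natr; congr (_ *+ _).
  by apply: eq_card => v; rewrite !inE -!topredE /= !inE andbA andbb.
rewrite /clipped_weight -big_split /=; apply: ler_sum => v _.
case: (boolP (v \in common_nbhd e D Q')) => [vQ'|_].
  by rewrite (QQ' v vQ') addrC subrK.
by case: ifPn => vQ; rewrite ?addr0 // addrC subrK m'_le.
Qed.

Lemma clipped_weight_addr_le Q m t (N : {set V}) :
  common_nbhd e D Q = D :&: N -> {in D :&: N, forall v, m + t <= c v} ->
  {in N, forall v, t <= c v} -> clipped_weight Q m + t * #|N|%:R <= \sum_v c v.
Proof.
rewrite /clipped_weight => -> DN_le N_le.
have -> : t * #|N|%:R = \sum_v (if v \in N then t else 0).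
  by rewrite -big_mkcond /= sumr_const mulr_natr.
rewrite big_mkcond /= -big_split /=; apply: ler_sum => v _.
have := DN_le v; have := N_le v; rewrite inE.
by case: (v \in D); case: (v \in N) => /= vN vDN;
  rewrite ?addr0 ?add0r ?vN ?vDN.
Qed.

Variables (al be : R) (r : nat).
Hypotheses (al_gt0 : 0 < al) (be_ge0 : 0 <= be).
Hypothesis card_common_nbhd_D_ge : forall Q, all (mem D) Q -> (size Q < r)%N ->
  al + be * (r - size Q)%:R <= #|common_nbhd e D Q|%:R.

(* Each step raises the floor from [m] to the weight of the new vertex on a
   common neighbourhood of size at least [al + be * (r - j)]. *)
Record greedy_state (j : nat) (Q : seq V) (m : R) : Prop := GreedyState {
  greedy_size : size Q = j;
  greedy_uniq : uniq Q;
  greedy_in_D : all (mem D) Q;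
  greedy_clique : is_clique Q;
  greedy_floor_ge0 : 0 <= m;
  greedy_floor_le : {in common_nbhd e D Q, forall v, m <= c v};
  greedy_weight : al * m + be * (\sum_(q <- Q) c q + (r - j)%:R * m)
                  <= clipped_weight Q m }.

Lemma greedy_state0 : greedy_state 0 [::] 0.
Proof.
split=> //.
rewrite big_nil !(mulr0, add0r) /clipped_weight big1 // => v vD.
by rewrite inE vD.
Qed.

Lemma greedy_step j Q m : (j < r)%N -> greedy_state j Q m ->
  exists Q' m', greedy_state j.+1 Q' m'.
Proof.
move=> ltjr [sizeQ uniqQ QD cliqueQ m_ge0 m_le weightQ]; subst j.
set S := common_nbhd e D Q in m_le weightQ.
have card_S_ge := card_common_nbhd_D_ge QD ltjr.
have /card_gt0P [v0 v0S] : (0 < #|S|)%N.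
  rewrite -(ltr0n R); apply: lt_le_trans card_S_ge.
  by apply: ltr_wpDr; rewrite ?mulr_ge0.
have [qs qsS qs_min] := arg_minP c v0S.
have /andP [qsD /allP Q_qs] : (qs \in D) && all (e^~ qs) Q.
  by have : qs \in S := qsS; rewrite inE.
exists (qs :: Q), (c qs); split.
- by [].
- by rewrite /= uniqQ andbT; apply/negP => /Q_qs; rewrite e_irr.
- by rewrite /= qsD.
- move=> a b; rewrite !inE => /predU1P [-> | aQ] /predU1P [-> | bQ].
  + by rewrite eqxx.
  + by rewrite e_sym => _; apply: Q_qs.
  + by move=> _; apply: Q_qs.
  + exact: cliqueQ.
- exact: c_ge0.
- by move=> v; rewrite common_nbhd_cons => /setIP [/qs_min].
have sub_S : common_nbhd e D (qs :: Q) \subset S.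
  by rewrite common_nbhd_cons subsetIl.
have := clipped_weight_raise m sub_S qs_min.
have : (c qs - m) * (al + be * (r - size Q)%:R) <= (c qs - m) * #|S|%:R.
  by rewrite ler_wpM2l // subr_ge0 m_le.
move: weightQ; rewrite -(subnSK ltjr) -addn1 natrD big_cons /=.
set sig := \sum_(q <- Q) c q; set A := (r - (size Q).+1)%:R.
set W := clipped_weight Q m; set W' := clipped_weight _ (c qs); set N := #|S|%:R.
have -> : al * c qs + be * (c qs + sig + A * c qs)
          = al * m + be * (sig + (A + 1) * m) + (c qs - m) * (al + be * (A + 1)).
  by ring.
lra.
Qed.

Lemma greedy_state_exists : exists Q m, greedy_state r Q m.
Proof.
suff : forall j, (j <= r)%N -> exists Q m, greedy_state j Q m by apply.
elim=> [_|j IH ltjr]; first by exists [::], 0; exact: greedy_state0.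
by have [Q [m /(greedy_step ltjr)]] := IH (ltnW ltjr).
Qed.

Lemma greedy_sum_weight_ge Q m (N : {set V}) (M : R) :
  greedy_state r Q m -> common_nbhd e D Q = D :&: N -> al <= #|N|%:R ->
  {in N, forall v, M <= c v} -> al * M + be * \sum_(q <- Q) c q <= \sum_v c v.
Proof.
move=> [_ _ _ _ m_ge0 m_le weightQ] SQ card_N_ge M_le.
pose t := Num.max (M - m) 0.
have t_ge0 : 0 <= t by rewrite le_max lexx orbT.
have DN_le : {in D :&: N, forall v, m + t <= c v}.
  move=> v vDN; rewrite /t addr_maxr addrC subrK addr0 ge_max m_le ?SQ //.
  by rewrite M_le //; move: vDN; rewrite inE => /andP [].
have N_le : {in N, forall v, t <= c v}.
  by move=> v vN; rewrite ge_max c_ge0 andbT lerBlDr (le_trans (M_le v vN)) ?lerDl.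
have := clipped_weight_addr_le SQ DN_le N_le.
have : t * al <= t * #|N|%:R by apply: ler_wpM2l.
have M_le_mt : M <= m + t by rewrite /t addr_maxr addrC subrK le_max lexx.
have : al * M <= al * (m + t) by rewrite ler_pM2l.
move: weightQ; rewrite subnn mul0r addr0.
set W := clipped_weight Q m; set sig := \sum_(q <- Q) c q; set T := t * #|N|%:R.
have -> : al * (m + t) = al * m + t * al by ring.
lra.
Qed.

End GreedyClique.

Section Proposition.
Variables (R : realFieldType) (s : nat).
Variables (VH : finType) (eH : rel VH) (col : VH -> 'I_s.+2) (i0 : 'I_s.+2).
Hypothesis col_proper : proper_colouring eH col.
Variables (VG : finType) (eG : rel VG) (c : VG -> R) (D : {set VG}) (x : R) (n : nat).
Hypotheses (eG_sym : symmetric eG) (eG_irr : irreflexive eG).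
Hypotheses (card_VG : #|VG| = n) (n_gt0 : (0 < n)%N).
Hypothesis c_cover : frac_hom_cover eH eG c.

Let rr : R := (s.+1)%:R.
Let k : R := #|VH|%:R.
Let l : R := #|[set u | col u == i0]|%:R.
Let delta : R := ((s.+2)%:R - 2 + x * l) * n%:R / ((s.+2)%:R - 1).
Let al : R := x * l * n%:R.
Let be : R := x * n%:R * ((k - l) / rr).

Hypotheses (x_gt0 : 0 < x) (xk_lt1 : x * k < 1) (l_gt0 : 0 < l).
Hypothesis card_D_ge : ((s.+2)%:R - 2 + x * k) * n%:R / ((s.+2)%:R - 1) <= #|D|%:R.
Hypothesis deg_D_ge : {in D, forall v, delta <= (deg eG v)%:R}.

Lemma rr_gt0 : 0 < rr. Proof. by rewrite ltr0n. Qed.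

Lemma natrS2_subn1 : (s.+2)%:R - 1 = rr :> R.
Proof. by rewrite -addn1 natrD addrK. Qed.

Lemma natrS2_subn2 : (s.+2)%:R - 2 = rr - 1 :> R.
Proof. by rewrite -addn1 natrD /rr; ring. Qed.

Lemma codeg_D_le : {in D, forall v, #|VG|%:R - (deg eG v)%:R <= (1 - x * l) * n%:R / rr}.
Proof.
move=> v /deg_D_ge; rewrite /delta card_VG natrS2_subn1 natrS2_subn2.
have -> : (1 - x * l) * n%:R / rr = n%:R - (rr - 1 + x * l) * n%:R / rr.
  by field; rewrite addrC natr1 pnatr_eq0.
by rewrite lerD2l lerN2.
Qed.

Lemma card_common_nbhd_D_ge Q : all (mem D) Q -> (size Q < s.+1)%N ->
  al + be * (s.+1 - size Q)%:R <= #|common_nbhd eG D Q|%:R.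
Proof.
move=> QD ltQ; have := card_common_nbhd_ge D QD codeg_D_le.
move: card_D_ge; rewrite natrS2_subn1 natrS2_subn2 natrB 1?ltnW //.
have j_lt : (size Q)%:R + 1 <= rr by rewrite natr1 ler_nat.
set j := (size Q)%:R in j_lt *.
have slack : 0 <= (rr - 1 - j) * (1 - x * k) * n%:R / rr.
  rewrite divr_ge0 ?(ltW rr_gt0) // !mulr_ge0 ?ler0n ?subr_ge0 ?(ltW xk_lt1) //.
  by rewrite lerBrDr.
have -> : al + be * (rr - j) =
    (rr - 1 + x * k) * n%:R / rr - j * ((1 - x * l) * n%:R / rr)
    - (rr - 1 - j) * (1 - x * k) * n%:R / rr.
  by rewrite /al /be; field; rewrite addrC natr1 pnatr_eq0.
move: slack; set a := (rr - 1 + x * k) * _ / rr; set b := j * _.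
set d := (rr - 1 - j) * _ * _ / _; lra.
Qed.

Lemma card_common_nbhd_clique_ge Q : all (mem D) Q -> size Q = s.+1 ->
  al <= #|common_nbhd eG setT Q|%:R.
Proof.
move=> QD sizeQ; have := card_common_nbhd_ge setT QD codeg_D_le.
rewrite cardsT card_VG sizeQ -/rr.
suff -> : n%:R - rr * ((1 - x * l) * n%:R / rr) = al by [].
by rewrite /al; field; rewrite addrC natr1 pnatr_eq0.
Qed.

Lemma apex_weight_ge Q w : uniq Q -> is_clique eG Q -> size Q = s.+1 ->
  w \in common_nbhd eG setT Q -> (1 - (k - l) / rr * \sum_(q <- Q) c q) / l <= c w.
Proof.
move=> uniqQ cliqueQ sizeQ; rewrite !inE /= => /allP w_adj.
have Q_clique (a b : 'I_s.+1) : a != b -> eG (nth w Q a) (nth w Q b).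
  by move=> ab; apply: cliqueQ; rewrite ?mem_nth ?nth_uniq ?sizeQ.
have Q_w (a : 'I_s.+1) : eG (nth w Q a) w by apply: w_adj; rewrite mem_nth ?sizeQ.
have := cover_clique_apex_ge eG_sym i0 col_proper Q_clique Q_w c_cover.
rewrite natrB ?max_card // -/k -/l -/rr.
rewrite (big_nth w) sizeQ big_mkord => apex.
rewrite ler_pdivrMr // -(ler_pM2l rr_gt0).
set S := \sum_(i < s.+1) _ in apex *.
have -> : rr * (1 - (k - l) / rr * S) = rr - (k - l) * S.
  by field; rewrite addrC natr1 pnatr_eq0.
by rewrite lerBlDr addrC mulrCA [c w * _]mulrC.
Qed.

Lemma cover_size_ge : x * n%:R <= cover_size c.
Proof.
have c_ge0 v : 0 <= c v by case: c_cover => /(_ v) /andP [].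
have al_gt0 : 0 < al by rewrite /al !mulr_gt0 // ltr0n.
have be_ge0 : 0 <= be.
  rewrite /be !mulr_ge0 ?invr_ge0 ?ler0n ?(ltW x_gt0) ?(ltW rr_gt0) //.
  by rewrite subr_ge0 ler_nat max_card.
have [Q [m greedyQ]] := greedy_state_exists eG_sym eG_irr c_ge0 al_gt0 be_ge0
  card_common_nbhd_D_ge.
have [sizeQ uniqQ QD cliqueQ _ _ _] := greedyQ.
have SQ : common_nbhd eG D Q = D :&: common_nbhd eG setT Q.
  by apply/setP => v; rewrite !inE.
have := greedy_sum_weight_ge c_ge0 al_gt0 greedyQ SQ
  (card_common_nbhd_clique_ge QD sizeQ) (fun w => apex_weight_ge uniqQ cliqueQ sizeQ).
set sig := \sum_(q <- Q) c q.
suff -> : x * n%:R = al * ((1 - (k - l) / rr * sig) / l) + be * sig by [].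
by rewrite /al /be; field; rewrite addrC natr1 pnatr_eq0 /= gt_eqF.
Qed.

End Proposition.

Theorem proposition2p8
  (R : realFieldType) (r : nat) (hr : (2 <= r)%N)
  (VH : finType) (eH : rel VH) (eH_sym : symmetric eH) (eH_irr : irreflexive eH)
  (col : VH -> 'I_r) (hcol : proper_colouring eH col)
  (lr : nat) (hlr_pos : (0 < lr)%N)
  (hlr_class : exists i : 'I_r, #|[set u | col u == i]| = lr)
  (hlr_min : forall i : 'I_r, (lr <= #|[set u | col u == i]|)%N)
  (x : R) (hx0 : 0 < x) (hx1 : x < 1 / (#|VH|)%:R)
  (n : nat) (hn : (0 < n)%N)
  (VG : finType) (eG : rel VG) (eG_sym : symmetric eG) (eG_irr : irreflexive eG)
  (hVG : #|VG| = n)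
  (hdeg : (r%:R - 2 + x * (#|VH|)%:R) * n%:R / (r%:R - 1)
          <= (#|[set v : VG | (r%:R - 2 + x * lr%:R) * n%:R / (r%:R - 1) <= (deg eG v)%:R]|)%:R)
  (c : VG -> R) (hc : frac_hom_cover eH eG c) :
  x * n%:R <= cover_size c.
Proof.
case: r hr col hcol hlr_class hlr_min hdeg => [|[|s]] // _ col hcol [i0 card_i0] _ hdeg.
rewrite -card_i0 in hdeg hlr_pos.
have card_VH_gt0 : (0 < #|VH|)%N := leq_trans hlr_pos (max_card _).
apply: (cover_size_ge (i0 := i0) hcol eG_sym eG_irr hVG hn hc hx0 _ _ hdeg) => //.
- by move: hx1; rewrite ltr_pdivlMr ?ltr0n // mul1r.
- by rewrite ltr0n.
- by move=> v; rewrite inE.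
Qed.
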